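(* For every cocycle $A=(A_1,\dots,A_k)\in\mathrm{SL}_2(\mathbb{R})^k$ the following dichotomy holds: $A$ is diagonalizable, or else $A$ or $A^{-1}$ is quasi-irreducible.
   Context: $\mathrm{SL}_2(\mathbb{R})$ denotes real $2\times2$ matrices with determinant $\pm1$. Let $p=(p_1,\dots,p_k)$ be a probability vector with positive entries, $X=\Sigma^{\mathbb{Z}}$ ($\Sigma=\{1,\dots,k\}$) with $\mathbb{P}=p^{\mathbb{Z}}$ and shift $T$; a cocycle $A$ acts by $A(x)=A_{x_0}$ with iterates $A^{(n)}(x)=A_{x_{n-1}}\cdots A_{x_0}$, and $L(A)\ge0$ is the a.s. limit of $\frac1n\log\|A^{(n)}(x)\|$. The inverse cocycle is $A^{-1}=(A_1^{-1},\dots,A_k^{-1})$ (its iterates are $A^{(n)}(T^{-n}x)^{-1}$), and $L(A^{-1})=L(A)$. If a line $\ell\subset\mathbb{R}^2$ is invariant under all $A_j$, write $A_jv=\lambda_jv$ for $v\in\ell$ and set $L(A|_\ell)=\sum_jp_j\log|\lambda_j|$. $A$ is quasi-irreducible if there is no line $\ell$ invariant under all $A_j$ with $L(A|_\ell)<L(A)$. $A$ is diagonalizable if there exist two transversal lines each invariant under all $A_j$. *)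

From HB Require Import structures.
From mathcomp Require Import all_boot all_order all_algebra.
From mathcomp Require Import all_classical all_reals all_analysis.
Set Implicit Arguments. Unset Strict Implicit. Unset Printing Implicit Defensive.
Import Order.TTheory GRing.Theory Num.Theory numFieldNormedType.Exports.
Local Open Scope ring_scope.

(* A cocycle over the full shift on k symbols: a k-tuple of 2x2 real matrices. *)

(* Frobenius (Euclidean) norm of a 2x2 matrix; the Lyapunov exponent does not
   depend on the choice of norm. *)
Definition frob_norm (R : realType) (M : 'M[R]_2) : R :=
  Num.sqrt (\sum_(i < 2) \sum_(j < 2) M i j ^+ 2).

(* n-th iterate along a word w = (x_0,...,x_{n-1}):
   A^(n)(x) = A_{x_{n-1}} ... A_{x_0}. *)
Definition iterate (R : realType) (k n : nat) (A : 'I_k -> 'M[R]_2)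
    (w : {ffun 'I_n -> 'I_k}) : 'M[R]_2 :=
  \prod_(i < n) A (w (rev_ord i)).

(* Probability of the cylinder [x_0..x_{n-1} = w] under the Bernoulli measure p^Z. *)
Definition word_prob (R : realType) (k n : nat) (p : 'I_k -> R)
    (w : {ffun 'I_n -> 'I_k}) : R :=
  \prod_(i < n) p (w i).

(* E[ log ||A^(n)(x)|| ] under p^Z (depends only on x_0..x_{n-1}). *)
Definition exp_log_norm (R : realType) (k : nat) (p : 'I_k -> R)
    (A : 'I_k -> 'M[R]_2) (n : nat) : R :=
  \sum_(w : {ffun 'I_n -> 'I_k}) word_prob p w * ln (frob_norm (iterate A w)).

(* Lyapunov exponent L(A) = lim_n (1/n) E log ||A^(n)||
   (= the a.s. limit of (1/n) log ||A^(n)(x)||, by Furstenberg-Kesten). *)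
Definition lyap (R : realType) (k : nat) (p : 'I_k -> R)
    (A : 'I_k -> 'M[R]_2) : R :=
  limn ((fun n : nat => exp_log_norm p A n.+1 / n.+1%:R) : R^nat).

Definition SL2pm (R : realType) (M : 'M[R]_2) : Prop :=
  \det M = 1 \/ \det M = -1.

Definition pos_prob_vec (R : realType) (k : nat) (p : 'I_k -> R) : Prop :=
  (forall j, 0 < p j) /\ \sum_(j < k) p j = 1.

Definition inv_line (R : realType) (k : nat) (A : 'I_k -> 'M[R]_2)
    (v : 'cV[R]_2) (lam : 'I_k -> R) : Prop :=
  v != 0 /\ forall j, A j *m v = lam j *: v.

Definition lyap_line (R : realType) (k : nat) (p : 'I_k -> R) (lam : 'I_k -> R) : R :=
  \sum_(j < k) p j * ln `|lam j|.

Definition quasi_irreducible (R : realType) (k : nat) (p : 'I_k -> R)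
    (A : 'I_k -> 'M[R]_2) : Prop :=
  ~ exists (v : 'cV[R]_2) (lam : 'I_k -> R),
      inv_line A v lam /\ lyap_line p lam < lyap p A.

Definition cocycle_diagonalizable (R : realType) (k : nat) (A : 'I_k -> 'M[R]_2) : Prop :=
  exists (v w : 'cV[R]_2) (lv lw : 'I_k -> R),
    inv_line A v lv /\ inv_line A w lw /\ forall c : R, w != c *: v.

Definition inv_cocycle (R : realType) (k : nat) (A : 'I_k -> 'M[R]_2) : 'I_k -> 'M[R]_2 :=
  fun j => invmx (A j).

(* Suppose the line spanned by v is invariant, with A_j v = lam_j v. In the orthogonal
   frame (v, v^perp) every product A^(n)(x) is upper triangular with diagonal entries
   Lam and +-1/Lam, where Lam = lam_{x_(n-1)} ... lam_{x_0}, and its corner entry is bounded,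
   up to a constant, by the sum of the n+1 products |mu_1 ... mu_m| / |mu_(m+1) ... mu_n|
   of the eigenvalues mu_i of its factors. So log ||A^(n)|| lies between |log |Lam|| and
   log (n+1) plus the logarithm of the largest such product, up to a constant. Bounding the
   largest product by a power mean and using the exponential moments of the random walk
   log |Lam| gives L(A) = |L(A|_l)|.
   If A is not diagonalizable it has at most one invariant line, which is then also the only
   invariant line of A^-1, with exponent -L(A|_l). Since L(A|_l) and -L(A|_l) cannot both be
   smaller than |L(A|_l)|, A or A^-1 is quasi-irreducible. *)


From HB Require Import structures.
From mathcomp Require Import all_boot all_order all_algebra.
From mathcomp Require Import all_classical all_reals all_analysis.
From mathcomp Require Import ring lra.
Import Order.TTheory GRing.Theory Num.Theory numFieldNormedType.Exports.
Local Open Scope classical_set_scope.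
Local Open Scope ring_scope.
Set Implicit Arguments. Unset Strict Implicit. Unset Printing Implicit Defensive.

Section Frame.
Variable R : realType.
Implicit Types (M N : 'M[R]_2) (u v : 'cV[R]_2).

Lemma sum_ord2 (F : 'I_2 -> R) : \sum_(i < 2) F i = F 0 + F 1.
Proof. by rewrite big_ord_recr big_ord1; congr (F _ + F _); apply: val_inj. Qed.

Lemma mulmx2E (m : nat) M (N : 'M[R]_(2, m)) i j :
  (M *m N) i j = M i 0 * N 0 j + M i 1 * N 1 j.
Proof. by rewrite mxE sum_ord2. Qed.

Lemma det_mx2 M : \det M = M 0 0 * M 1 1 - M 0 1 * M 1 0.
Proof.
rewrite (expand_det_row _ 0) sum_ord2 /cofactor !det_mx11 !mxE /=.
have -> : lift (0 : 'I_2) 0 = 1 by apply: val_inj.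
have -> : lift (1 : 'I_2) 0 = 0 by apply: val_inj.
by rewrite expr0 expr1 mul1r mulN1r mulrN.
Qed.

Definition dot2 u v := u 0 0 * v 0 0 + u 1 0 * v 1 0.

Definition perp2 v : 'cV[R]_2 := \col_i (if i == 0 then - v 1 0 else v 0 0).

Lemma perp2E v : (perp2 v 0 0 = - v 1 0) * (perp2 v 1 0 = v 0 0).
Proof. by rewrite !mxE. Qed.

Definition frob_sq M := \sum_(i < 2) \sum_(j < 2) M i j ^+ 2.

Lemma frob_sqE M : frob_sq M = M 0 0 ^+ 2 + M 0 1 ^+ 2 + M 1 0 ^+ 2 + M 1 1 ^+ 2.
Proof. by rewrite /frob_sq !sum_ord2 addrA. Qed.

(* In the frame [(v, perp2 v)], whose vectors are orthogonal of squared length [dot2 v v],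
   [M] has the matrix [[dot2 v (M v), frame_corner v M], [dot2 (perp2 v) (M v),
   frame_bottom v M]] / dot2 v v, which is upper triangular when [M] fixes the line of [v]. *)
Definition frame_corner v M := dot2 v (M *m perp2 v).
Definition frame_bottom v M := dot2 (perp2 v) (M *m perp2 v).

Lemma dot2_gt0 v : v != 0 -> 0 < dot2 v v.
Proof.
move=> v0; rewrite lt0r /dot2 -!expr2 addr_ge0 ?sqr_ge0 // andbT.
rewrite paddr_eq0 ?sqr_ge0 // !sqrf_eq0; apply: contra v0 => /andP[/eqP v00 /eqP v10].
apply/eqP/matrixP => i j; rewrite (ord1 j) mxE.
by case: i => [[|[|]]] //= ?; [rewrite -v00 | rewrite -v10]; congr (v _ _); apply: val_inj.
Qed.

Lemma frob_sq_frame M v : frob_sq M * dot2 v v ^+ 2 =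
  dot2 v (M *m v) ^+ 2 + dot2 (perp2 v) (M *m v) ^+ 2 +
  frame_corner v M ^+ 2 + frame_bottom v M ^+ 2.
Proof.
rewrite frob_sqE /frame_corner /frame_bottom /dot2 !(perp2E, mulmx2E); ring.
Qed.

Lemma det_frame M v :
  \det M * dot2 v v = dot2 (perp2 (M *m v)) (M *m perp2 v).
Proof. rewrite det_mx2 /dot2 !(perp2E, mulmx2E); ring. Qed.

Lemma frame_corner_mul M N v : frame_corner v (M *m N) * dot2 v v =
  frame_corner v N * dot2 v (M *m v) + frame_bottom v N * frame_corner v M.
Proof.
rewrite /frame_corner /frame_bottom /dot2 -mulmxA !(perp2E, mulmx2E); ring.
Qed.

Lemma dot2_scaler u v a : dot2 u (a *: v) = a * dot2 u v.
Proof. by rewrite /dot2 !mxE; ring. Qed.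

Lemma perp2_dot2 v : dot2 (perp2 v) v = 0.
Proof. by rewrite /dot2 !perp2E; ring. Qed.

Lemma perp2Z a v : perp2 (a *: v) = a *: perp2 v.
Proof. by apply/matrixP => i j; rewrite !mxE; case: eqP => _; rewrite ?mulrN. Qed.

Section EigenLine.
Variable v : 'cV[R]_2.
Hypothesis v0 : v != 0.

Lemma frame_bottom_eigen M l : M *m v = l *: v ->
  l * frame_bottom v M = \det M * dot2 v v.
Proof.
by move=> Mv; rewrite det_frame Mv perp2Z /frame_bottom /dot2 !mxE; ring.
Qed.

Lemma eigen_neq0 M l : M *m v = l *: v -> \det M ^+ 2 = 1 -> l != 0.
Proof.
move=> Mv detM; apply: contra_eqN (frame_bottom_eigen Mv) => /eqP->.
rewrite mul0r eq_sym mulf_neq0 ?(lt0r_neq0 (dot2_gt0 v0)) //.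
by apply: contra_eqN detM => /eqP->; rewrite expr0n eq_sym oner_eq0.
Qed.

Lemma frob_sq_eigen M l : M *m v = l *: v -> \det M ^+ 2 = 1 ->
  frob_sq M = l ^+ 2 + l ^-2 + (frame_corner v M / dot2 v v) ^+ 2.
Proof.
move=> Mv detM; have l0 := eigen_neq0 Mv detM; have n0 := lt0r_neq0 (dot2_gt0 v0).
have bottomE : frame_bottom v M = \det M * dot2 v v / l.
  by rewrite -(frame_bottom_eigen Mv) mulrAC divff ?mul1r.
apply: (mulIf (expf_neq0 2 n0)); rewrite frob_sq_frame Mv !dot2_scaler perp2_dot2 bottomE.
rewrite !exprMn detM; field; exact/andP.
Qed.

Lemma frame_corner_mul_eigen M N lM lN : M *m v = lM *: v -> N *m v = lN *: v ->
  \det N ^+ 2 = 1 ->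
  frame_corner v (M *m N) = lM * frame_corner v N + \det N / lN * frame_corner v M.
Proof.
move=> Mv Nv detN; have lN0 := eigen_neq0 Nv detN.
have n0 := lt0r_neq0 (dot2_gt0 v0).
have bottomE : frame_bottom v N = \det N * dot2 v v / lN.
  by rewrite -(frame_bottom_eigen Nv) mulrAC divff ?mul1r.
apply: (mulIf n0); rewrite frame_corner_mul Mv dot2_scaler bottomE; field; exact: lN0.
Qed.

Lemma frob_norm_eigen_ge M l : M *m v = l *: v -> \det M ^+ 2 = 1 ->
  `|l| <= frob_norm M /\ `|l|^-1 <= frob_norm M.
Proof.
move=> Mv detM; rewrite -normfV -[`|l|]sqrtr_sqr -[`|l^-1|]sqrtr_sqr.
rewrite /frob_norm -/(frob_sq M) (frob_sq_eigen Mv detM) exprVn.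
split; apply: ler_wsqrtr; first by rewrite -addrA lerDl addr_ge0 ?invr_ge0 ?sqr_ge0.
by rewrite addrAC lerDr addr_ge0 ?sqr_ge0.
Qed.

Lemma frob_norm_eigen_le M l : M *m v = l *: v -> \det M ^+ 2 = 1 ->
  frob_norm M <= `|l| + `|l|^-1 + `|frame_corner v M| / dot2 v v.
Proof.
move=> Mv detM; have n0 := dot2_gt0 v0.
rewrite /frob_norm -/(frob_sq M) (frob_sq_eigen Mv detM).
set a := `|l|; set b := a^-1; set c := `|frame_corner v M| / dot2 v v.
have a0 : 0 <= a := normr_ge0 l.
have b0 : 0 <= b by rewrite invr_ge0.
have c0 : 0 <= c := divr_ge0 (normr_ge0 _) (ltW n0).
have -> : l ^+ 2 = a ^+ 2 by rewrite real_normK ?num_real.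
have -> : a ^- 2 = b ^+ 2 by rewrite exprVn.
have -> : (frame_corner v M / dot2 v v) ^+ 2 = c ^+ 2.
  by rewrite /c -[in RHS](gtr0_norm n0) -normf_div real_normK ?num_real.
rewrite -[X in _ <= X]ger0_norm ?addr_ge0 // -sqrtr_sqr; apply: ler_wsqrtr.
have := mulr_ge0 a0 b0; have := mulr_ge0 b0 c0; have := mulr_ge0 a0 c0.
lra.
Qed.

End EigenLine.

End Frame.

Section LineProducts.
Variable R : realType.
Variable v : 'cV[R]_2.
Hypothesis v0 : v != 0.

Definition split_prod n (l : 'I_n -> R) (m : nat) :=
  \prod_(i < n) (if (i < m)%N then `|l i| else `|l i|^-1).

Lemma split_prod0 n (l : 'I_n -> R) : split_prod l 0 = `|\prod_(i < n) l i|^-1.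
Proof. by rewrite normr_prod -prodfV. Qed.

Lemma split_prodn n (l : 'I_n -> R) : split_prod l n = `|\prod_(i < n) l i|.
Proof. by rewrite normr_prod; apply: eq_bigr => i _; rewrite ltn_ord. Qed.

Lemma split_prodS n (l : 'I_n.+1 -> R) m :
  split_prod l m.+1 = `|l ord0| * split_prod (l \o lift ord0) m.
Proof. by rewrite /split_prod big_ord_recl. Qed.

Lemma prod_eigen n (B : 'I_n -> 'M[R]_2) l : (forall i, B i *m v = l i *: v) ->
  (\prod_(i < n) B i) *m v = (\prod_(i < n) l i) *: v.
Proof.
move=> Bv; apply: (big_ind2 (fun M a => M *m v = a *: v)) => //.
  by rewrite mul1mx scale1r.
by move=> M N a b Mv Nv; rewrite -mulmxE -mulmxA Nv -scalemxAr Mv scalerA mulrC.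
Qed.

Lemma det_prod_sqr n (B : 'I_n -> 'M[R]_2) : (forall i, \det (B i) ^+ 2 = 1) ->
  \det (\prod_(i < n) B i) ^+ 2 = 1.
Proof.
move=> detB; apply: (big_ind (fun M => \det M ^+ 2 = 1)) => //.
  by rewrite det1 expr1n.
by move=> M N dM dN; rewrite -mulmxE det_mulmx exprMn dM dN mulr1.
Qed.

Lemma frame_corner1 : frame_corner v 1%:M = 0.
Proof. by rewrite /frame_corner mul1mx /dot2 !perp2E; ring. Qed.

Lemma frame_corner_prod_le n (B : 'I_n -> 'M[R]_2) l K :
  (forall i, B i *m v = l i *: v) -> (forall i, \det (B i) ^+ 2 = 1) ->
  (forall i, `|frame_corner v (B i)| <= K * `|l i|) ->
  `|frame_corner v (\prod_(i < n) B i)| <= K * \sum_(m < n) split_prod l m.+1.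
Proof.
elim: n B l => [|n IH] B l Bv detB cornerB.
  by rewrite big_ord0 frame_corner1 normr0 big_ord0 mulr0.
have Qv := prod_eigen (fun i => Bv (lift ord0 i)).
have detQ := det_prod_sqr (fun i => detB (lift ord0 i)).
have detQ1 : `|\det (\prod_(i < n) B (lift ord0 i))| = 1.
  by apply/eqP; rewrite -sqr_norm_eq1 detQ.
rewrite big_ord_recl -mulmxE (frame_corner_mul_eigen v0 (Bv ord0) Qv detQ).
have sumS : \sum_(m < n) split_prod l (lift ord0 m).+1 =
    `|l ord0| * \sum_(m < n) split_prod (l \o lift ord0) m.+1.
  by rewrite mulr_sumr; apply: eq_bigr => m _; rewrite -split_prodS.
rewrite big_ord_recl split_prodS sumS split_prod0.
apply: (le_trans (ler_normD _ _)); rewrite [X in _ <= X]mulrDr [X in _ <= X]addrC; apply: lerD.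
  by rewrite normrM mulrCA; apply: ler_wpM2l => //; exact: IH.
rewrite !normrM normfV detQ1 mul1r mulrA [X in _ <= X]mulrC.
by apply: ler_wpM2l; rewrite ?invr_ge0.
Qed.

Lemma split_prod_ge0 n (l : 'I_n -> R) m : 0 <= split_prod l m.
Proof. by apply: prodr_ge0 => i _; case: ifP; rewrite ?invr_ge0. Qed.

Lemma split_prod_le_sum n (l : 'I_n -> R) m : (m <= n)%N ->
  split_prod l m <= \sum_(j < n.+1) split_prod l j.
Proof.
rewrite -ltnS => mn; rewrite (bigD1 (Ordinal mn)) //= lerDl.
by apply: sumr_ge0 => j _; apply: split_prod_ge0.
Qed.

Lemma frob_norm_prod_le n (B : 'I_n -> 'M[R]_2) l K :
  (forall i, B i *m v = l i *: v) -> (forall i, \det (B i) ^+ 2 = 1) ->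
  (forall i, `|frame_corner v (B i)| <= K * `|l i|) -> 0 <= K ->
  frob_norm (\prod_(i < n) B i) <=
    (2 + K / dot2 v v) * \sum_(m < n.+1) split_prod l m.
Proof.
move=> Bv detB cornerB K0; have n0 := dot2_gt0 v0.
set S := \sum_(m < n.+1) split_prod l m.
have tail_le : \sum_(m < n) split_prod l m.+1 <= S.
  by rewrite /S big_ord_recl lerDr split_prod_ge0.
apply: le_trans (frob_norm_eigen_le v0 (prod_eigen Bv) (det_prod_sqr detB)) _.
rewrite -split_prod0 -split_prodn mulrDl mulrDl mul1r mulrAC.
apply: lerD; first by apply: lerD; apply: split_prod_le_sum.
rewrite ler_pM2r ?invr_gt0 //.
apply: le_trans (frame_corner_prod_le Bv detB cornerB) _.
by apply: ler_wpM2l.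
Qed.

End LineProducts.

Section RealBounds.
Variable R : realType.

(* [expR u <= (1 - u)^-1], since [1 - u <= expR (- u)]. *)
Lemma expR_le_quadratic (u : R) : u <= 1 / 2 -> expR u <= 1 + u + 2 * u ^+ 2.
Proof.
move=> u_le; have u1 : 0 < 1 - u by lra.
rewrite -(ler_pM2r u1); apply: (@le_trans _ _ 1); last by nra.
rewrite -[X in _ <= X](expRxMexpNx_1 u); apply: ler_wpM2l; first exact: expR_ge0.
exact: expR_ge1Dx.
Qed.

Lemma ln_le_subr1 (x : R) : 0 < x -> ln x <= x - 1.
Proof.
move=> x0; have := @le_ln1Dx R (x - 1); rewrite addrCA subrr addr0; apply.
by rewrite ltrBrDr addrC subrr.
Qed.

Lemma sumr_ord_gt0 n (F : 'I_n.+1 -> R) : (forall m, 0 < F m) -> 0 < \sum_m F m.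
Proof.
move=> F0; rewrite big_ord_recl; apply: ltr_wpDr => //.
by apply: sumr_ge0 => m _; apply: ltW.
Qed.

Lemma ln_sum_le (n : nat) (f : 'I_n.+1 -> R) (s : R) : 0 < s -> (forall m, 0 < f m) ->
  ln (\sum_m f m) <= ln n.+1%:R + ln (\sum_m expR (s * ln (f m))) / s.
Proof.
move=> s0 f0; set Y := \sum_m expR _.
have Y0 : 0 < Y by apply: sumr_ord_gt0 => m; rewrite expR_gt0.
have f_le m : f m <= expR (ln Y / s).
  rewrite -[f m]lnK ?posrE // ler_expR ler_pdivlMr // mulrC.
  rewrite -[X in X <= _]expRK ler_ln ?posrE ?expR_gt0 // /Y (bigD1 m) //= lerDl.
  by apply: sumr_ge0 => j _; apply: expR_ge0.
have sum_le : \sum_m f m <= n.+1%:R * expR (ln Y / s).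
  by apply: le_trans (ler_sum _ (fun m _ => f_le m)) _; rewrite sumr_const card_ord mulr_natl.
rewrite -[ln Y / s]expRK -lnM ?posrE ?ltr0n ?expR_gt0 //.
by rewrite ler_ln ?posrE ?mulr_gt0 ?ltr0n ?expR_gt0 ?sumr_ord_gt0.
Qed.

(* From [ln (d * x) < d * x] with a small slope [d]. *)
Lemma ln_sublinear_near (C D e : R) : 0 < e ->
  \forall n \near \oo, C + D * ln n.+2%:R <= e * n.+1%:R.
Proof.
move=> e0; set D' := `|D| + 1; have D'0 : 0 < D' by rewrite ltr_pwDr.
set d := e / (2 * D'); have d0 : 0 < d by rewrite divr_gt0 ?mulr_gt0.
have Dd : D' * d = e / 2 by rewrite /d; field; rewrite gt_eqF.
near=> n.
have n_ge : 2 * (C - D' * ln d) / e + 1 <= n%:R by near: n; apply: nbhs_infty_ger.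
have ln_le : ln n.+2%:R <= d * n.+2%:R - ln d.
  have := ln_sublinear (mulr_gt0 d0 (ltr0n R n.+2)).
  rewrite lnM ?posrE ?ltr0n // => /ltW; lra.
have ln0 : 0 <= ln (n.+2%:R : R) by apply: ln_ge0; rewrite ler1n.
have D_le : D * ln n.+2%:R <= D' * ln n.+2%:R.
  by rewrite ler_wpM2r // (le_trans (ler_norm D)) // lerDl.
have Dln : D' * ln n.+2%:R <= e / 2 * n.+2%:R - D' * ln d.
  by rewrite -Dd -mulrA -mulrBr ler_wpM2l // ltW.
have n_ge' : 2 * (C - D' * ln d) + e <= e * n%:R.
  have <- : e * (2 * (C - D' * ln d) / e + 1) = 2 * (C - D' * ln d) + e.
    by field; rewrite gt_eqF.
  by apply: ler_wpM2l => //; apply: ltW.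
have n2 : (n.+2%:R : R) = n%:R + 2 by rewrite -addn2 natrD.
have n1 : (n.+1%:R : R) = n%:R + 1 by rewrite -addn1 natrD.
rewrite n2 in D_le Dln *; rewrite n1.
lra.
Unshelve. all: end_near.
Qed.

Lemma ln_prod (I : Type) (r : seq I) (f : I -> R) :
  (forall i, 0 < f i) -> ln (\prod_(i <- r) f i) = \sum_(i <- r) ln (f i).
Proof.
move=> f0; rewrite -[X in ln X](@eq_bigr _ _ _ _ _ _ (fun i => expR (ln (f i)))).
  by rewrite -expR_sum expRK.
by move=> i _; rewrite lnK ?posrE.
Qed.

Lemma norm_ln_le (x y : R) : 0 < x -> x <= y -> x^-1 <= y -> `|ln x| <= ln y.
Proof.
move=> x0 xy xVy; have y0 := lt_le_trans x0 xy.
rewrite ler_norml ler_ln ?posrE // xy andbT.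
by rewrite lerNl -lnV ?posrE // ler_ln ?posrE ?invr_gt0.
Qed.

Lemma cvg_mean_squeeze (u : nat -> R) (a : R) :
  (forall n, n.+1%:R * a <= u n) ->
  (forall e, 0 < e -> \forall n \near \oo, u n <= n.+1%:R * (a + e)) ->
  (fun n => u n / n.+1%:R) @ \oo --> a.
Proof.
move=> lower upper; apply/cvgrPdist_le => e e0.
near=> n; have n0 : 0 < n.+1%:R :> R by [].
rewrite distrC ger0_norm; last by rewrite subr_ge0 ler_pdivlMr // mulrC lower.
rewrite lerBlDl ler_pdivrMr // mulrC.
by near: n; apply: upper.
Unshelve. all: end_near.
Qed.

End RealBounds.

Lemma ln_split_prod (R : realType) n (l : 'I_n -> R) m : (forall i, l i != 0) ->
  ln (split_prod l m) = \sum_(i < n) (if (i < m)%N then ln `|l i| else - ln `|l i|).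
Proof.
move=> l0; rewrite ln_prod => [|i]; last by case: ifP; rewrite ?invr_gt0 normr_gt0.
by apply: eq_bigr => i _; case: ifP => _; rewrite ?lnV ?posrE ?normr_gt0.
Qed.

Section WordMean.
Variables (R : realType) (k : nat) (p : 'I_k -> R).
Hypotheses (p_gt0 : forall j, 0 < p j) (p_sum1 : \sum_(j < k) p j = 1).

Definition word_mean n (F : {ffun 'I_n -> 'I_k} -> R) :=
  \sum_(w : {ffun 'I_n -> 'I_k}) word_prob p w * F w.

Lemma word_mean_prod n (g : 'I_n -> 'I_k -> R) :
  word_mean (fun w => \prod_(i < n) g i (w i)) = \prod_(i < n) \sum_(c < k) p c * g i c.
Proof. by rewrite bigA_distr_bigA; apply: eq_bigr => w _; rewrite -big_split. Qed.

Lemma word_prob_sum n : \sum_(w : {ffun 'I_n -> 'I_k}) word_prob p w = 1.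
Proof.
have := word_mean_prod (fun (_ : 'I_n) (_ : 'I_k) => 1).
rewrite /word_mean.
under eq_bigr => w _ do rewrite big1 // mulr1.
by move=> ->; apply: big1 => i _; under eq_bigr => c _ do rewrite mulr1.
Qed.

Lemma word_mean_coord n (j : 'I_n) (f : 'I_k -> R) :
  word_mean (fun w => f (w j)) = \sum_(c < k) p c * f c.
Proof.
have -> : word_mean (fun w => f (w j)) =
    word_mean (fun w => \prod_(i < n) if i == j then f (w i) else 1).
  by apply: eq_bigr => w _; rewrite (bigD1 j) //= eqxx big1 ?mulr1 // => i /negPf ->.
rewrite (word_mean_prod (fun i c => if i == j then f c else 1)) (bigD1 j) //= eqxx.
rewrite [X in _ * X]big1 ?mulr1 // => i /negPf ->.
by under eq_bigr do rewrite mulr1.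
Qed.

Lemma word_meanD n (F G : {ffun 'I_n -> 'I_k} -> R) :
  word_mean (fun w => F w + G w) = word_mean F + word_mean G.
Proof. by rewrite -big_split; apply: eq_bigr => w _; rewrite mulrDr. Qed.

Lemma word_mean_cst n c : word_mean (fun _ : {ffun 'I_n -> 'I_k} => c) = c.
Proof. by rewrite /word_mean -mulr_suml word_prob_sum mul1r. Qed.

Lemma word_meanZ n c (F : {ffun 'I_n -> 'I_k} -> R) :
  word_mean (fun w => c * F w) = c * word_mean F.
Proof. by rewrite mulr_sumr; apply: eq_bigr => w _; rewrite mulrCA. Qed.

Lemma word_mean_sum n I (r : seq I) (F : I -> {ffun 'I_n -> 'I_k} -> R) :
  word_mean (fun w => \sum_(i <- r) F i w) = \sum_(i <- r) word_mean (F i).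
Proof. by rewrite /word_mean exchange_big; apply: eq_bigr => w _; rewrite mulr_sumr. Qed.

Lemma word_prob_gt0 n (w : {ffun 'I_n -> 'I_k}) : 0 < word_prob p w.
Proof. by apply: prodr_gt0 => i _; apply: p_gt0. Qed.

Lemma ler_word_mean n (F G : {ffun 'I_n -> 'I_k} -> R) :
  (forall w, F w <= G w) -> word_mean F <= word_mean G.
Proof. by move=> FG; apply: ler_sum => w _; rewrite ler_pM2l ?word_prob_gt0. Qed.

Lemma ler_norm_word_mean n (F : {ffun 'I_n -> 'I_k} -> R) :
  `|word_mean F| <= word_mean (fun w => `|F w|).
Proof.
apply: le_trans (ler_norm_sum _ _ _) _; apply: ler_sum => w _.
by rewrite normrM gtr0_norm ?word_prob_gt0.
Qed.

Lemma word_mean_gt0 n (F : {ffun 'I_n -> 'I_k} -> R) :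
  (forall w, 0 < F w) -> 0 < word_mean F.
Proof.
move=> F0; have [j0 _ | k0] := pickP (@predT 'I_k); last first.
  by move: p_sum1; rewrite big_pred0 // => /eqP; rewrite eq_sym oner_eq0.
rewrite /word_mean (bigD1 [ffun=> j0]) //= ltr_wpDr ?mulr_gt0 ?word_prob_gt0 //.
by apply: sumr_ge0 => w _; rewrite mulr_ge0 ?ltW ?word_prob_gt0.
Qed.

(* Jensen: average the tangent line [ln x <= ln c + x / c - 1] at [c = word_mean F]. *)
Lemma word_mean_ln_le n (F : {ffun 'I_n -> 'I_k} -> R) : (forall w, 0 < F w) ->
  word_mean (fun w => ln (F w)) <= ln (word_mean F).
Proof.
move=> F0; set c := word_mean F; have c0 : 0 < c := word_mean_gt0 F0.
have tangent w : ln (F w) <= ln c + (c^-1 * F w - 1).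
  rewrite [c^-1 * _]mulrC -lerBlDl -ln_div ?posrE //; exact: ln_le_subr1 (divr_gt0 _ _).
apply: le_trans (ler_word_mean tangent) _.
rewrite word_meanD word_meanD word_meanZ !word_mean_cst.
by rewrite mulVf ?gt_eqF // subrr addr0.
Qed.

End WordMean.

Section LineLyapunov.
Variables (R : realType) (k : nat) (p : 'I_k -> R) (A : 'I_k -> 'M[R]_2).
Variables (v : 'cV[R]_2) (lam : 'I_k -> R).
Hypotheses (p_gt0 : forall j, 0 < p j) (p_sum1 : \sum_(j < k) p j = 1).
Hypotheses (v0 : v != 0) (Av : forall j, A j *m v = lam j *: v).
Hypothesis detA : forall j, \det (A j) ^+ 2 = 1.

Definition word_eigen n (w : {ffun 'I_n -> 'I_k}) (i : 'I_n) := lam (w (rev_ord i)).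

Lemma lam_neq0 j : lam j != 0.
Proof. exact (eigen_neq0 v0 (Av j) (detA j)). Qed.

Lemma iterate_eigen n (w : {ffun 'I_n -> 'I_k}) :
  iterate A w *m v = (\prod_(i < n) word_eigen w i) *: v.
Proof. by apply: prod_eigen => i; apply: Av. Qed.

Lemma det_iterate n (w : {ffun 'I_n -> 'I_k}) : \det (iterate A w) ^+ 2 = 1.
Proof. by apply: det_prod_sqr => i; apply: detA. Qed.

Definition corner_bound := \sum_(j < k) `|frame_corner v (A j)| / `|lam j|.

Lemma corner_bound_ge0 : 0 <= corner_bound.
Proof. by apply: sumr_ge0 => j _; rewrite divr_ge0. Qed.

Lemma frame_corner_le j : `|frame_corner v (A j)| <= corner_bound * `|lam j|.
Proof.
rewrite -ler_pdivrMr ?normr_gt0 ?lam_neq0 // /corner_bound (bigD1 j) //= lerDl.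
by apply: sumr_ge0 => i _; rewrite divr_ge0.
Qed.

Lemma ln_frob_iterate_ge n (w : {ffun 'I_n -> 'I_k}) :
  `|\sum_(i < n) ln `|word_eigen w i| | <= ln (frob_norm (iterate A w)).
Proof.
have [le1 le2] := frob_norm_eigen_ge v0 (iterate_eigen w) (det_iterate w).
rewrite -ln_prod -?normr_prod => [|i]; last by rewrite normr_gt0 lam_neq0.
by apply: norm_ln_le; rewrite // normr_gt0; apply/prodf_neq0 => i _; apply: lam_neq0.
Qed.

Definition split_power_sum (s : R) n (w : {ffun 'I_n -> 'I_k}) :=
  \sum_(m < n.+1) expR (s * ln (split_prod (word_eigen w) m)).

Lemma ln_frob_iterate_le (s : R) n (w : {ffun 'I_n -> 'I_k}) : 0 < s ->
  ln (frob_norm (iterate A w)) <=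
    ln (2 + corner_bound / dot2 v v) + ln n.+1%:R + s^-1 * ln (split_power_sum s w).
Proof.
move=> s0; have n0 := dot2_gt0 v0; set C := 2 + _.
have C0 : 0 < C by rewrite ltr_wpDr ?divr_ge0 ?corner_bound_ge0 ?ltW.
have sp0 m : 0 < split_prod (word_eigen w) m.
  by apply: prodr_gt0 => i _; case: ifP; rewrite ?invr_gt0 normr_gt0 lam_neq0.
have frob0 : 0 < frob_norm (iterate A w).
  have [+ _] := frob_norm_eigen_ge v0 (iterate_eigen w) (det_iterate w).
  by apply: lt_le_trans; rewrite normr_gt0; apply/prodf_neq0 => i _; apply: lam_neq0.
have Sw0 : 0 < \sum_(m < n.+1) split_prod (word_eigen w) m by apply: sumr_ord_gt0.
apply: (@le_trans _ _ (ln (C * \sum_(m < n.+1) split_prod (word_eigen w) m))).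
  rewrite ler_ln ?posrE ?mulr_gt0 //.
  apply: (@frob_norm_prod_le _ _ v0 _ (fun i => A (w (rev_ord i)))) => [i|i|i|].
  - exact: Av.
  - exact: detA.
  - exact: frame_corner_le.
  - exact: corner_bound_ge0.
by rewrite lnM ?posrE // -addrA lerD2l mulrC; apply: ln_sum_le.
Qed.

Definition log_bound := \sum_(c < k) `|ln `|lam c| |.
Definition log_second_moment := \sum_(c < k) p c * ln `|lam c| ^+ 2.
Definition growth_rate (s : R) := s * `|lyap_line p lam| + 2 * s ^+ 2 * log_second_moment.

Lemma letter_moment_le (t : R) : `|t| * log_bound <= 1 / 2 ->
  \sum_(c < k) p c * expR (t * ln `|lam c|) <= expR (growth_rate `|t|).
Proof.
move=> t_small.
apply: (@le_trans _ _ (\sum_(c < k) p c * (1 + t * ln `|lam c| + 2 * (t * ln `|lam c|) ^+ 2))).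
  apply: ler_sum => c _; rewrite ler_pM2l //; apply: expR_le_quadratic.
  apply: le_trans (ler_norm _) (le_trans _ t_small); rewrite normrM ler_wpM2l //.
  by rewrite /log_bound (bigD1 c) //= lerDl sumr_ge0.
have -> : \sum_(c < k) p c * (1 + t * ln `|lam c| + 2 * (t * ln `|lam c|) ^+ 2) =
    1 + (t * lyap_line p lam + 2 * t ^+ 2 * log_second_moment).
  have termE c : p c * (1 + t * ln `|lam c| + 2 * (t * ln `|lam c|) ^+ 2) =
      p c + t * (p c * ln `|lam c|) + 2 * t ^+ 2 * (p c * ln `|lam c| ^+ 2) by ring.
  by rewrite (eq_bigr _ (fun c _ => termE c)) !big_split /= p_sum1 -!mulr_sumr addrA.
apply: le_trans (expR_ge1Dx _) _; rewrite ler_expR /growth_rate real_normK ?num_real //.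
by rewrite lerD2r -normrM ler_norm.
Qed.

Lemma split_moment_le (s : R) n m : 0 < s -> s * log_bound <= 1 / 2 ->
  word_mean p (fun w : {ffun 'I_n -> 'I_k} => expR (s * ln (split_prod (word_eigen w) m)))
    <= expR (growth_rate s) ^+ n.
Proof.
move=> s0 s_small.
pose g (i : 'I_n) c := expR ((if (rev_ord i < m)%N then s else - s) * ln `|lam c|).
have -> : (fun w : {ffun 'I_n -> 'I_k} => expR (s * ln (split_prod (word_eigen w) m))) =
    (fun w => \prod_(i < n) g i (w i)).
  apply: funext => w; rewrite ln_split_prod => [|i]; last exact: lam_neq0.
  rewrite mulr_sumr expR_sum (reindex_inj rev_ord_inj) /=.
  by apply: eq_bigr => i _; rewrite /g /word_eigen rev_ordK; case: ifP; rewrite ?mulNr ?mulrN.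
rewrite word_mean_prod -[n in _ ^+ n]card_ord -prodr_const.
apply: ler_prod => i _; rewrite sumr_ge0 => [|c _]; last by rewrite mulr_ge0 ?expR_ge0 ?ltW.
have /eqP abs_s : `|if (rev_ord i < m)%N then s else - s| == s.
  by case: ifP; rewrite ?normrN gtr0_norm.
by rewrite -[in X in _ <= X]abs_s letter_moment_le // abs_s.
Qed.

Lemma exp_log_normE n : exp_log_norm p A n =
  word_mean p (fun w : {ffun 'I_n -> 'I_k} => ln (frob_norm (iterate A w))).
Proof. by []. Qed.

Lemma exp_log_norm_ge n : n%:R * `|lyap_line p lam| <= exp_log_norm p A n.
Proof.
have meanE : word_mean p (fun w : {ffun 'I_n -> 'I_k} => \sum_(i < n) ln `|word_eigen w i|)
    = n%:R * lyap_line p lam.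
  have coordE i : word_mean p (fun w : {ffun 'I_n -> 'I_k} => ln `|word_eigen w i|) =
      lyap_line p lam := word_mean_coord p_sum1 (rev_ord i) (fun c => ln `|lam c|).
  by rewrite word_mean_sum (eq_bigr _ (fun i _ => coordE i)) sumr_const card_ord mulr_natl.
rewrite -[n%:R]normr_nat -normrM -meanE.
apply: le_trans (ler_norm_word_mean p_gt0 _) _.
rewrite exp_log_normE; exact: (ler_word_mean p_gt0 (@ln_frob_iterate_ge n)).
Qed.

Lemma exp_log_norm_le (s : R) n : 0 < s -> s * log_bound <= 1 / 2 ->
  exp_log_norm p A n <= ln (2 + corner_bound / dot2 v v) + (1 + s^-1) * ln n.+1%:R
                        + n%:R * (`|lyap_line p lam| + 2 * s * log_second_moment).
Proof.
move=> s0 s_small.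
have Y0 (w : {ffun 'I_n -> 'I_k}) : 0 < split_power_sum s w.
  by apply: sumr_ord_gt0 => m; apply: expR_gt0.
have meanY : word_mean p (fun w : {ffun 'I_n -> 'I_k} => split_power_sum s w) <=
    n.+1%:R * expR (growth_rate s) ^+ n.
  rewrite /split_power_sum word_mean_sum.
  apply: le_trans (ler_sum _ (fun (m : 'I_n.+1) _ => split_moment_le n m s0 s_small)) _.
  by rewrite sumr_const card_ord mulr_natl.
have lnY : word_mean p (fun w : {ffun 'I_n -> 'I_k} => ln (split_power_sum s w)) <=
    ln n.+1%:R + n%:R * growth_rate s.
  apply: le_trans (word_mean_ln_le p_gt0 p_sum1 Y0) _.
  rewrite -[n%:R * _]expRK expRM_natl -lnM ?posrE ?ltr0n ?exprn_gt0 ?expR_gt0 //.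
  by rewrite ler_ln ?posrE ?mulr_gt0 ?ltr0n ?exprn_gt0 ?expR_gt0 ?word_mean_gt0.
rewrite exp_log_normE.
apply: le_trans (ler_word_mean p_gt0 (fun w => ln_frob_iterate_le w s0)) _.
rewrite word_meanD word_meanD word_meanZ !(word_mean_cst p_sum1).
have sV0 : 0 <= s^-1 by rewrite invr_ge0 ltW.
have := ler_wpM2l sV0 lnY.
have -> : s^-1 * (ln n.+1%:R + n%:R * growth_rate s) =
    s^-1 * ln n.+1%:R + n%:R * (`|lyap_line p lam| + 2 * s * log_second_moment).
  by rewrite /growth_rate; field; apply: lt0r_neq0.
lra.
Qed.

Lemma lyap_inv_line : lyap p A = `|lyap_line p lam|.
Proof.
apply: (cvg_lim (@Rhausdorff R)); apply: cvg_mean_squeeze => [n|e e0].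
  exact: exp_log_norm_ge.
have M0 : 0 <= log_bound by apply: sumr_ge0.
have V0 : 0 <= log_second_moment by apply: sumr_ge0 => c _; rewrite mulr_ge0 ?sqr_ge0 ?ltW.
(* Small enough for [exp_log_norm_le], and making the drift error [2 s V] at most [e / 2]. *)
pose s := Num.min (2 * (log_bound + 1))^-1 (e / (4 * (log_second_moment + 1))).
have M1 := ltr_wpDl M0 (@ltr01 R); have V1 := ltr_wpDl V0 (@ltr01 R).
have s0 : 0 < s by rewrite lt_min invr_gt0 divr_gt0 ?mulr_gt0.
have sM : s * (2 * (log_bound + 1)) <= 1.
  by rewrite -ler_pdivlMr ?mulr_gt0 // div1r ge_min lexx.
have sV : s * (4 * (log_second_moment + 1)) <= e.
  by rewrite -ler_pdivlMr ?mulr_gt0 // ge_min lexx orbT.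
have s_small : s * log_bound <= 1 / 2 by nra.
have sV2 : 2 * s * log_second_moment <= e / 2 by nra.
near=> n.
have up := exp_log_norm_le n.+1 s0 s_small.
have err : ln (2 + corner_bound / dot2 v v) + (1 + s^-1) * ln n.+2%:R <= e / 2 * n.+1%:R.
  by near: n; apply: ln_sublinear_near; rewrite divr_gt0.
have := ler_wpM2l (ler0n R n.+1) sV2.
lra.
Unshelve. all: end_near.
Qed.

End LineLyapunov.

Lemma SL2pm_det_sqr (R : realType) (M : 'M[R]_2) : SL2pm M -> \det M ^+ 2 = 1.
Proof. by case=> ->; rewrite ?sqrrN expr1n. Qed.

Section InverseCocycle.
Variables (R : realType) (k : nat) (A : 'I_k -> 'M[R]_2).
Hypothesis detA : forall j, \det (A j) ^+ 2 = 1.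

Lemma det_inv_cocycle j : \det (inv_cocycle A j) ^+ 2 = 1.
Proof. by rewrite det_inv exprVn detA invr1. Qed.

Lemma inv_line_inv_cocycle v l :
  inv_line (inv_cocycle A) v l -> inv_line A v (fun j => (l j)^-1).
Proof.
move=> [v0 Aiv]; split=> // j.
have Aj : A j \in unitmx.
  rewrite unitmxE unitfE; apply: contra_eqN (detA j) => /eqP->.
  by rewrite expr0n eq_sym oner_eq0.
have l0 := eigen_neq0 v0 (Aiv j) (det_inv_cocycle j).
rewrite -[in LHS](scale1r v) -(mulVf l0) -scalerA -Aiv /inv_cocycle.
by rewrite -scalemxAr mulmxA mulmxV // mul1mx.
Qed.

Lemma inv_line_unique v w lv lw : ~ cocycle_diagonalizable A ->
  inv_line A v lv -> inv_line A w lw -> lw = lv.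
Proof.
move=> ndiag [v0 Av] [w0 Aw].
have [c wE] : exists c, w = c *: v.
  apply: contrapT => nvw; apply: ndiag; exists v, w, lv, lw; split=> //; split=> // c.
  by apply/eqP => wE; apply: nvw; exists c.
apply: funext => j; apply/eqP; rewrite -subr_eq0.
have : (lw j - lv j) *: w = 0.
  by rewrite scalerBl -Aw {1}wE -scalemxAr Av scalerA mulrC -scalerA -wE subrr.
by move/eqP; rewrite scaler_eq0 (negPf w0) orbF.
Qed.

End InverseCocycle.

Lemma lyap_line_inv (R : realType) k (p : 'I_k -> R) (lam : 'I_k -> R) :
  (forall j, lam j != 0) -> lyap_line p (fun j => (lam j)^-1) = - lyap_line p lam.
Proof.
move=> lam0; rewrite /lyap_line -sumrN; apply: eq_bigr => j _.
by rewrite normfV lnV ?posrE ?normr_gt0 // mulrN.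
Qed.

Theorem lemma2p5 (R : realType) (k : nat) (p : 'I_k -> R) (A : 'I_k -> 'M[R]_2)
  (hp : pos_prob_vec p) (hA : forall j, SL2pm (A j)) :
  cocycle_diagonalizable A \/ quasi_irreducible p A \/ quasi_irreducible p (inv_cocycle A).
Proof.
have [p_gt0 p_sum1] := hp; have detA j := SL2pm_det_sqr (hA j).
have [|ndiag] := pselect (cocycle_diagonalizable A); first by left.
have [|nqA] := pselect (quasi_irreducible p A); first by right; left.
right; right => -[w [l [[w0 Aiw] ltw]]].
have [v [lam [[v0 Av] ltv]]] := contrapT nqA.
have lE := inv_line_unique ndiag (conj v0 Av) (inv_line_inv_cocycle detA (conj w0 Aiw)).
rewrite (lyap_inv_line p_gt0 p_sum1 v0 Av detA) in ltv.
rewrite (lyap_inv_line p_gt0 p_sum1 w0 Aiw (det_inv_cocycle detA)) in ltw.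
have linv : l = fun j => (lam j)^-1 by apply: funext => j; rewrite -lE invrK.
rewrite linv (lyap_line_inv _ (lam_neq0 v0 Av detA)) normrN in ltw.
move: ltv ltw; rewrite !ltr_normr !ltxx orbF /=.
lra.
Qed.
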